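(* Let $B\ge 1$ be an integer and let $x,y\in[0,1]$. Define $s(x)=\mathrm{round}(Bx)\in\{0,1,\dots,B\}$ (rounding to the nearest integer), and let $\boldsymbol{\phi}(x)\in\{0,1\}^{2B}$ be the binary vector whose coordinates $s(x), s(x)+1,\dots,s(x)+B-1$ (coordinates indexed $0,\dots,2B-1$) equal $1$ and all other coordinates equal $0$; define $s(y)$ and $\boldsymbol{\phi}(y)$ in the same way. Let $t:=|x-y|$, $t_-:=\max\{0,\,t-\tfrac1B\}$ and $t_+:=\min\{1,\,t+\tfrac1B\}$. Then $$\frac{2t_-}{1+t_-}\;\le\; d_J(\boldsymbol{\phi}(x),\boldsymbol{\phi}(y))\;\le\;\frac{2t_+}{1+t_+}.$$
   Context: For binary vectors $\mathbf{a},\mathbf{b}\in\{0,1\}^{m}$ with supports $A=\{k:a_k=1\}$ and $C=\{k:b_k=1\}$ (not both empty), the Jaccard distance is $d_J(\mathbf{a},\mathbf{b})=1-\frac{|A\cap C|}{|A\cup C|}$. The map $\boldsymbol{\phi}$ is the ''Binary Encoding with Padding'' of a numerical value scaled to $[0,1]$: a contiguous block of $B$ ones placed inside a vector of length $2B$ at an offset proportional to the value. *)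

From mathcomp Require Import all_boot all_order all_algebra.
From mathcomp Require Import reals.

Import Order.TTheory GRing.Theory Num.Theory.
Local Open Scope ring_scope.

(* Jaccard distance of binary vectors a b in {0,1}^m, via their supports.
   (Only meaningful when the supports are not both empty.) *)
Definition jaccard (R : realType) {m : nat} (a b : 'I_m -> bool) : R :=
  let A := [set k | a k] in
  let C := [set k | b k] in
  1 - (#|A :&: C|%:R / #|A :|: C|%:R).

(* round to nearest integer, ties rounded up: floor(z + 1/2) *)
Definition round_nearest {R : realType} (z : R) : int := Num.floor (z + 2^-1).

Definition bep_shift {R : realType} (B : nat) (x : R) : int :=
  round_nearest (B%:R * x).

Definition bep {R : realType} (B : nat) (x : R) : 'I_(2 * B) -> bool :=
  fun k => (bep_shift B x <= (k : nat)%:Z) && ((k : nat)%:Z < bep_shift B x + B%:Z).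

(* Both encodings are windows of B consecutive ones in a vector of length 2B.
   Windows whose offsets differ by D share B - D coordinates and cover B + D,
   so d_J = 2u/(1+u) with u = D/B.  Rounding moves each offset by at most 1/2,
   hence |u - t| <= 1/B, and the bounds follow since u |-> 2u/(1+u) is
   increasing on [0, oo). *)
From mathcomp Require Import all_boot all_order all_algebra.
From mathcomp Require Import reals.
From mathcomp Require Import zify ring lra.
Set Implicit Arguments.
Unset Strict Implicit.
Unset Printing Implicit Defensive.

Import Order.TTheory GRing.Theory Num.Theory.
Local Open Scope ring_scope.

Definition jaccard_ratio (R : realType) (u : R) : R := (2 * u) / (1 + u).

Lemma jaccard_ratio_le (R : realType) (a b : R) :
  0 <= a -> a <= b -> jaccard_ratio a <= jaccard_ratio b.
Proof.
move=> a0 ab; have a1 : 0 < 1 + a by lra.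
have b1 : 0 < 1 + b by lra.
by rewrite /jaccard_ratio ler_pdivrMr // mulrAC ler_pdivlMr //; nra.
Qed.

Lemma eq_jaccard (R : realType) m (a a' b b' : 'I_m -> bool) :
  a =1 a' -> b =1 b' -> jaccard R a b = jaccard R a' b'.
Proof. by move=> /eq_finset eqa /eq_finset eqb; rewrite /jaccard eqa eqb. Qed.

Lemma card_ord_itv n lo hi : (hi <= n)%N ->
  #|[set k : 'I_n | (lo <= k < hi)%N]| = (hi - lo)%N.
Proof.
move=> hi_n; have [lo_hi | hi_lo] := leqP lo hi; last first.
  have -> : (hi - lo = 0)%N by lia.
  by apply/eqP; rewrite cards_eq0; apply/eqP/setP => k; rewrite !inE; lia.
rewrite -sum1_card (eq_bigl (fun k : 'I_n => (lo <= k < hi)%N)) => [|k]; last first.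
  by rewrite inE.
rewrite -(big_mkord (fun k => (lo <= k < hi)%N) (fun _ => 1%N)).
rewrite -(big_nat_widen 0 hi n (fun k => (lo <= k)%N)) //.
rewrite (eq_bigl (fun i => predT i && (lo <= i)%N)) // -(big_nat_widenl lo 0) //.
by rewrite big_mkcond /= sum_nat_const_nat muln1.
Qed.

Section Windows.

Variables (m B : nat).

Definition window (a : nat) : {set 'I_m} := [set k : 'I_m | (a <= k < a + B)%N].

Lemma card_window a : (a + B <= m)%N -> #|window a| = B.
Proof. by move=> aB; rewrite card_ord_itv ?addKn. Qed.

Lemma window_setI a c :
  window a :&: window c = [set k : 'I_m | (maxn a c <= k < minn a c + B)%N].
Proof.
by apply/setP => k; rewrite !inE; apply/idP/idP; lia.
Qed.

Variables (a c : nat).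
Hypotheses (aB : (a + B <= m)%N) (cB : (c + B <= m)%N).

Lemma card_window_setI : #|window a :&: window c| = (B - `|a - c|)%N.
Proof. by rewrite window_setI card_ord_itv; lia. Qed.

Lemma card_window_setU : (`|a - c| <= B)%N ->
  #|window a :|: window c| = (B + `|a - c|)%N.
Proof.
move=> dB; have := cardsUI (window a) (window c).
by rewrite card_window_setI !card_window //; lia.
Qed.

Lemma jaccard_window (R : realType) : (0 < B)%N -> (`|a - c| <= B)%N ->
  jaccard R (fun k : 'I_m => (a <= k < a + B)%N)
            (fun k : 'I_m => (c <= k < c + B)%N) =
  jaccard_ratio (`|a - c|%N%:R / B%:R).
Proof.
move=> B_gt0 dB; rewrite /jaccard -/(window a) -/(window c).
rewrite card_window_setI card_window_setU //.
rewrite /jaccard_ratio natrB // natrD; field.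
by rewrite -natrD !pnatr_eq0; lia.
Qed.

End Windows.

Lemma round_nearest_dist (R : realType) (z : R) :
  `|(round_nearest z)%:~R - z| <= 2^-1.
Proof.
have /andP[lo hi] := floor_itv (z + 2^-1).
by rewrite /round_nearest ler_norml; rewrite intrD in hi; apply/andP; split; lra.
Qed.

Lemma round_nearest_nat (R : realType) (z : R) (n : nat) : 0 <= z <= n%:R ->
  exists2 k : nat, round_nearest z = k%:Z & (k <= n)%N.
Proof.
move=> /andP[z0 zn].
have r0 : 0 <= round_nearest z by rewrite floor_ge0; lra.
have rn : round_nearest z <= n%:Z.
  by rewrite -ltzD1 floor_lt_int intrD; lra.
by case: (round_nearest z) r0 rn => // k _ kn; exists k.
Qed.

Lemma bep_window (R : realType) (B : nat) (x : R) (n : nat) :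
  bep_shift B x = n%:Z -> bep B x =1 (fun k => (n <= k < n + B)%N).
Proof. by move=> sx k; rewrite /bep sx lez_nat -PoszD ltz_nat. Qed.

Lemma dist_rounded_offsets (R : realType) (B : nat) (x y : R) (a c : nat) :
  (0 < B)%N -> round_nearest (B%:R * x) = a%:Z -> round_nearest (B%:R * y) = c%:Z ->
  `| `|a - c|%N%:R / B%:R - `|x - y| | <= B%:R^-1.
Proof.
move=> B_gt0 sx sy.
have ax := round_nearest_dist (B%:R * x); rewrite sx in ax.
have cy := round_nearest_dist (B%:R * y); rewrite sy in cy.
have Bpos : (0 : R) < B%:R by rewrite ltr0n.
have -> : `|a - c|%N%:R = `|a%:R - c%:R| :> R.
  by rewrite natr_absz intr_norm rmorphB.
have -> : `|a%:R - c%:R| / B%:R - `|x - y| =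
          (`|a%:R - c%:R| - `|B%:R * (x - y)|) / B%:R.
  by rewrite normrM (gtr0_norm Bpos); field; rewrite gt_eqF.
rewrite normrM normfV (gtr0_norm Bpos) -[leRHS]mul1r ler_pM2r ?invr_gt0 //.
apply: le_trans (ler_dist_dist _ _) _.
have -> : a%:R - c%:R - B%:R * (x - y) =
          (a%:R - B%:R * x) - (c%:R - B%:R * y) :> R by ring.
by apply: le_trans (ler_normB _ _) _; lra.
Qed.

Lemma near_itv_bounds (R : realType) (u t e : R) : 0 <= u <= 1 ->
  `|u - t| <= e -> Num.max 0 (t - e) <= u <= Num.min 1 (t + e).
Proof.
move=> /andP[u0 u1]; rewrite ler_norml => /andP[lo hi].
by rewrite ge_max le_min u0 u1 /=; apply/andP; split; lra.
Qed.

Theorem lemma3p1 (R : realType) (B : nat) (x y : R) :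
  (1 <= B)%N -> 0 <= x <= 1 -> 0 <= y <= 1 ->
  let t : R := `|x - y| in
  let tm : R := Num.max 0 (t - (B%:R)^-1) in
  let tp : R := Num.min 1 (t + (B%:R)^-1) in
  (2 * tm) / (1 + tm) <= jaccard R (bep B x) (bep B y) <= (2 * tp) / (1 + tp).
Proof.
move=> B_gt0 hx hy /=.
have scaled (z : R) : 0 <= z <= 1 -> 0 <= B%:R * z <= B%:R.
  by move=> /andP[z0 z1]; rewrite mulr_ge0 //= ler_piMr.
have [a sx aB] := round_nearest_nat (scaled x hx).
have [c sy cB] := round_nearest_nat (scaled y hy).
rewrite (eq_jaccard R (bep_window sx) (bep_window sy)) jaccard_window; try lia.
set u := `|a - c|%N%:R / B%:R.
have u01 : 0 <= u <= 1.
  by rewrite divr_ge0 //= ler_pdivrMr ?ltr0n // mul1r ler_nat; lia.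
have ut := dist_rounded_offsets B_gt0 sx sy.
have /andP[tm_u u_tp] := near_itv_bounds u01 ut.
have /andP[u0 _] := u01.
by apply/andP; split; apply: jaccard_ratio_le; rewrite ?le_max ?lexx.
Qed.
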